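(* Let $K$ be a division ring, $G$ a group, and suppose nonzero elements $a,b\in K[G]$ satisfy $ab=0$ and both contain the identity element of $G$ in their supports. Then there is a subgroup $H$ of $G$ such that, letting $c=E^G_H(a)$ and $d=E^G_H(b)$: (i) $cd=0$; (ii) $c\ne0$ and $d\ne0$; (iii) the support of $c$ generates $H$; (iv) the support of $d$ generates $H$.
   Context: $K[G]$ is the group ring; the support of an element is the set of group elements with nonzero coefficient. For a subgroup $H\le G$, $E^G_H:K[G]\to K[H]$ is the $K$-linear map with $E^G_H(g)=g$ for $g\in H$ and $E^G_H(g)=0$ for $g\notin H$. *)

From HB Require Import structures.
From mathcomp Require Import all_boot all_order all_algebra.
From mathcomp Require Import finmap.
Set Implicit Arguments. Unset Strict Implicit. Unset Printing Implicit Defensive.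
Import GRing.Theory.
Local Open Scope ring_scope.
Local Open Scope fset_scope.

Notation grpring K G := {fsfun G -> K with 0}.

Section GroupRing.
Variables (K : unitRingType) (G : groupType).

Definition grmul (a b : grpring K G) (g : G) : K :=
  \sum_(h <- finsupp a) a h * b (h^-1 * g)%g.

Definition grmul_eq0 (a b : grpring K G) : Prop := forall g : G, grmul a b g = 0.

Definition gr_nonzero (a : grpring K G) : Prop := exists g : G, a g != 0.

(* E^G_H : K[G] -> K[H] (K[H] viewed inside K[G]). *)
Definition grE (H : {pred G}) (a : grpring K G) : grpring K G :=
  [fsfun g in finsupp a => if g \in H then a g else 0 | 0].

Definition subgroup (H : {pred G}) : Prop := group_closed H.

Definition generates (S : {pred G}) (H : {pred G}) : Prop :=
  [/\ subgroup H, {subset S <= H} &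
      forall H' : {pred G}, subgroup H' -> {subset S <= H'} -> {subset H <= H'}].

End GroupRing.

Definition division_ring (K : unitRingType) : Prop :=
  forall x : K, x != 0 -> x \is a GRing.unit.

(* Among the subgroups H with E_H(a) E_H(b) = 0 (G itself is one), pick one
   minimising |supp c| + |supp d|, where c := E_H(a) and d := E_H(b).  If the
   support of x lies in a subgroup L, then x E_L(y) = E_L(x y); hence
   L := <supp c> again satisfies E_L(a) E_L(b) = c E_L(d) = E_L(c d) = 0, and
   E_L(a) = c.  By minimality E_L(d) = d, i.e. supp d lies in L.  Symmetrically
   supp c lies in <supp d>, so both supports generate L.  The identity lying in
   both supports keeps every projection nonzero. *)
From HB Require Import structures.
From mathcomp Require Import all_boot all_order all_algebra.
From mathcomp Require Import finmap.
From mathcomp Require Import boolp.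
Local Open Scope ring_scope.
Local Open Scope fset_scope.

Import GRing.Theory.
Set Implicit Arguments.
Unset Strict Implicit.

Lemma ex_minimal (T : Type) (P : T -> Prop) (f : T -> nat) :
  (exists x, P x) -> exists2 x, P x & forall y, P y -> (f x <= f y)%N.
Proof.
move=> [x0 Px0].
have exm : exists m, `[< exists x, P x /\ f x = m >].
  by exists (f x0); apply/asboolP; exists x0.
have [m /asboolP[x [Px <-]] minm] := find_ex_minn exm.
by exists x => // y Py; apply: minm; apply/asboolP; exists y.
Qed.

Section Subgroups.
Variable G : groupType.
Implicit Types (H : {pred G}) (S : {pred G}).

Lemma subgroup1 H : subgroup H -> (1%g : G) \in H.
Proof. by case. Qed.

Lemma subgroupV H u : subgroup H -> u \in H -> (u^-1)%g \in H.
Proof. by move/group_closedV; apply. Qed.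

Lemma subgroupM H u v : subgroup H -> u \in H -> v \in H -> (u * v)%g \in H.
Proof. by move/group_closedM; apply. Qed.

Lemma subgroupVMl H h g :
  subgroup H -> h \in H -> ((h^-1 * g)%g \in H) = (g \in H).
Proof.
move=> sH hH; apply/idP/idP => [hgH | gH].
  by rewrite -(mulVKg h g); apply: subgroupM.
exact: subgroupM sH (subgroupV sH hH) gH.
Qed.

Lemma subgroupVMr H h g :
  subgroup H -> g \in H -> ((h^-1 * g)%g \in H) = (h \in H).
Proof.
move=> sH gH; apply/idP/idP => [hgH | hH].
  by rewrite -(invgK h) -(mulgK g h^-1)%g subgroupV // subgroupM // subgroupV.
exact: subgroupM sH (subgroupV sH hH) gH.
Qed.

Definition gen S : {pred G} :=
  fun g => `[< forall H, subgroup H -> {subset S <= H} -> g \in H >].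

Lemma subset_gen S : {subset S <= gen S}.
Proof. by move=> g gS; apply/asboolP => H _; apply. Qed.

Lemma gen_subset S H : subgroup H -> {subset S <= H} -> {subset gen S <= H}.
Proof. by move=> sH SH g /asboolP; apply. Qed.

Lemma subgroup_gen S : subgroup (gen S).
Proof.
split; first by apply/asboolP => H [].
move=> u v /asboolP uS /asboolP vS; apply/asboolP => H sH SH.
exact: subgroupM sH (uS _ sH SH) (subgroupV sH (vS _ sH SH)).
Qed.

Lemma generates_gen S S' :
  {subset S' <= gen S} -> {subset S <= gen S'} -> generates S' (gen S).
Proof.
move=> S'S SS'; split=> [|//|H sH S'H]; first exact: subgroup_gen.
by move=> g /(gen_subset (subgroup_gen S') SS'); apply: gen_subset.
Qed.

End Subgroups.

Section Projection.
Variables (K : unitRingType) (G : groupType).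
Implicit Types (x y : grpring K G) (H L : {pred G}).

Lemma grEE H x g : grE H x g = if g \in H then x g else 0.
Proof.
rewrite fsfunE; case: ifP => // /negbT; rewrite mem_finsupp negbK => /eqP ->.
by case: ifP.
Qed.

Lemma mem_finsupp_grE H x g :
  (g \in finsupp (grE H x)) = (g \in H) && (g \in finsupp x).
Proof. by rewrite !mem_finsupp grEE; case: ifP; rewrite ?eqxx. Qed.

Lemma finsupp_grE_in H x : {subset finsupp (grE H x) <= H}.
Proof. by move=> g; rewrite mem_finsupp_grE => /andP[]. Qed.

Lemma finsupp_grE_sub H x : finsupp (grE H x) `<=` finsupp x.
Proof. by apply/fsubsetP => g; rewrite mem_finsupp_grE => /andP[]. Qed.

Lemma grE_id H x : {subset finsupp x <= H} -> grE H x = x.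
Proof.
move=> xH; apply/fsfunP => g; rewrite grEE; case: ifP => // /negbT gNH.
by apply/esym/eqP; rewrite -memNfinsupp; apply: contra gNH => /xH.
Qed.

Lemma grE_grE L H x : {subset L <= H} -> grE L (grE H x) = grE L x.
Proof. by move=> LH; apply/fsfunP => g; rewrite !grEE; case: ifP => // /LH ->. Qed.

Lemma grE_gen_finsupp H x :
  subgroup H -> grE (gen (mem (finsupp (grE H x)))) x = grE H x.
Proof.
move=> sH; set L := gen _.
have LH : {subset L <= H} by apply: gen_subset => //; apply: finsupp_grE_in.
apply/fsfunP => g; rewrite !grEE; case: ifP => [/LH -> // | gNL].
case: ifP => // gH; apply/esym/eqP; apply: contraFT gNL => xg.
by apply: subset_gen; rewrite /= mem_finsupp_grE gH mem_finsupp.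
Qed.

Lemma card_finsupp_grE H x :
  (#|` finsupp x| <= #|` finsupp (grE H x)|)%N -> {subset finsupp x <= H}.
Proof.
move=> le_x; have sub := finsupp_grE_sub H x.
have <- : finsupp (grE H x) = finsupp x.
  by apply/eqP; rewrite -(fsubset_leqif_cards sub) eqn_leq le_x fsubset_leq_card.
exact: finsupp_grE_in.
Qed.

Lemma grmul_grEr H x y g : subgroup H -> {subset finsupp x <= H} ->
  grmul x (grE H y) g = if g \in H then grmul x y g else 0.
Proof.
move=> sH xH; rewrite /grmul; case: ifP => gH.
  by apply: eq_big_seq => h /xH hH; rewrite grEE subgroupVMl ?gH.
by apply: big1_seq => h /andP[_ /xH hH]; rewrite grEE subgroupVMl ?gH ?mulr0.
Qed.

Lemma grmul_grEl H x y g : subgroup H -> {subset finsupp y <= H} ->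
  grmul (grE H x) y g = if g \in H then grmul x y g else 0.
Proof.
move=> sH yH; rewrite /grmul (big_fset_incl _ (finsupp_grE_sub H x)); last first.
  by move=> h _; rewrite memNfinsupp => /eqP ->; rewrite mul0r.
have termE h : grE H x h * y (h^-1 * g)%g =
    if g \in H then x h * y (h^-1 * g)%g else 0.
  rewrite grEE; have [-> | ] := eqVneq (y (h^-1 * g)%g) 0.
    by rewrite !mulr0; case: ifP.
  rewrite -mem_finsupp => /yH hgH; have [hH | hNH] := boolP (h \in H).
    by rewrite -(subgroupVMl g sH hH) hgH.
  by rewrite mul0r; case: ifP => // gH; rewrite -(subgroupVMr h sH gH) hgH in hNH.
by case: ifP => gH; [apply: eq_bigr | apply: big1] => h _; rewrite termE gH.
Qed.

Lemma grmul_eq0_grEr H x y : subgroup H -> {subset finsupp x <= H} ->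
  grmul_eq0 x y -> grmul_eq0 x (grE H y).
Proof. by move=> sH xH xy0 g; rewrite grmul_grEr // xy0; case: ifP. Qed.

Lemma grmul_eq0_grEl H x y : subgroup H -> {subset finsupp y <= H} ->
  grmul_eq0 x y -> grmul_eq0 (grE H x) y.
Proof. by move=> sH yH xy0 g; rewrite grmul_grEl // xy0; case: ifP. Qed.

End Projection.

Section MinimalAnnihilatingSubgroup.
Variables (K : unitRingType) (G : groupType) (a b : grpring K G).

Definition annihilating (H : {pred G}) :=
  subgroup H /\ grmul_eq0 (grE H a) (grE H b).

Definition supp_size (H : {pred G}) :=
  (#|` finsupp (grE H a)| + #|` finsupp (grE H b)|)%N.

Variable H : {pred G}.
Hypothesis annH : annihilating H.
Hypothesis minH : forall L, annihilating L -> (supp_size H <= supp_size L)%N.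

Let c := grE H a.
Let d := grE H b.

Lemma finsupp_sub_genl : {subset finsupp d <= gen (mem (finsupp c))}.
Proof.
have [sH cd0] := annH; set L := gen _.
have sL : subgroup L := subgroup_gen _.
have LH : {subset L <= H} by apply: gen_subset => //; apply: finsupp_grE_in.
have Ea : grE L a = c by apply: grE_gen_finsupp.
have Eb : grE L b = grE L d by rewrite grE_grE.
have annL : annihilating L.
  by split; rewrite // Ea Eb; apply: grmul_eq0_grEr => // g; apply: subset_gen.
by apply: card_finsupp_grE; have := minH annL; rewrite /supp_size Ea Eb leq_add2l.
Qed.

Lemma finsupp_sub_genr : {subset finsupp c <= gen (mem (finsupp d))}.
Proof.
have [sH cd0] := annH; set L := gen _.
have sL : subgroup L := subgroup_gen _.
have LH : {subset L <= H} by apply: gen_subset => //; apply: finsupp_grE_in.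
have Eb : grE L b = d by apply: grE_gen_finsupp.
have Ea : grE L a = grE L c by rewrite grE_grE.
have annL : annihilating L.
  by split; rewrite // Ea Eb; apply: grmul_eq0_grEl => // g; apply: subset_gen.
by apply: card_finsupp_grE; have := minH annL; rewrite /supp_size Ea Eb leq_add2r.
Qed.

End MinimalAnnihilatingSubgroup.

Theorem proposition2p7 (K : unitRingType) (G : groupType)
    (HK : division_ring K) (a b : grpring K G) :
  gr_nonzero a -> gr_nonzero b -> grmul_eq0 a b ->
  (1%g : G) \in finsupp a -> (1%g : G) \in finsupp b ->
  exists H : {pred G},
    subgroup H /\
    let c := grE H a in
    let d := grE H b in
    [/\ grmul_eq0 c d,
        gr_nonzero c /\ gr_nonzero d,
        generates (mem (finsupp c)) H &
        generates (mem (finsupp d)) H].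
Proof.
move=> _ _ ab0 a1 b1.
have annG : annihilating a b predT.
  by split; [split=> // | rewrite !grE_id].
have [H annH minH] := ex_minimal (supp_size a b) (ex_intro _ _ annG).
have [sH cd0] := annH.
have dL := finsupp_sub_genl annH minH.
have cL := finsupp_sub_genr annH minH.
set L := gen (mem (finsupp (grE H a))).
have LH : {subset L <= H} by apply: gen_subset => //; apply: finsupp_grE_in.
have Ea : grE L a = grE H a by apply: grE_gen_finsupp.
have Eb : grE L b = grE H b by rewrite -(grE_grE b LH) grE_id.
have nz x : (1%g : G) \in finsupp x -> gr_nonzero (grE H x).
  by move=> x1; exists 1%g; rewrite -mem_finsupp mem_finsupp_grE subgroup1.
exists L; split; first exact: subgroup_gen.
rewrite /= Ea Eb; split=> //; first by split; apply: nz.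
- exact: generates_gen (@subset_gen _ _) (@subset_gen _ _).
- exact: generates_gen dL cL.
Qed.
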